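(* Let $(I,\le)$ be a totally ordered set with smallest element $0$, and let $\{G_i,\pi_{ij}\}$ be a direct system of finitely generated groups indexed by $I$ with surjective homomorphisms $\pi_{ij}:G_i\to G_j$ for all $j\ge i$ (with $\pi_{ii}=\mathrm{id}$ and $\pi_{jk}\circ\pi_{ij}=\pi_{ik}$). Let $G_\infty=\varinjlim G_i$, let $G=G_0$, let $\varphi_i=\pi_{0i}:G\to G_i$, let $\varphi:G\to G_\infty$ be the canonical (surjective) map, and for a subgroup $H\le G$ put $H_i=\varphi_i(H)$. Fix a prime $p$. Then for each normal subgroup $K\trianglelefteq G_\infty$ of $p$-power index there exists a normal subgroup $H'\trianglelefteq G$ of $p$-power index such that: (1) $K=\varinjlim H'_i$ (i.e. $K=\varphi(H')$ is the direct limit of the subgroups $H'_i$ under the restricted maps $\pi_{ij}$); (2) $[G_\infty:K]=\lim_{i\in I}[G_i:H'_i]$; (3) $d_p(K)=\lim_{i\in I}d_p(H'_i)$.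
   Context: For a group $A$, $d(A)$ is the minimal number of generators and $d_p(A)=d\big(A/[A,A]A^p\big)$. Limits over $i\in I$ are taken along the total order of $I$. *)

From mathcomp Require Import ssreflect ssrbool ssrnat prime.
From Stdlib Require Import List.

Set Implicit Arguments.
Unset Strict Implicit.

Record group : Type := Group {
  gcar :> Type;
  gmul : gcar -> gcar -> gcar;
  gone : gcar;
  ginv : gcar -> gcar;
  gmulA : forall x y z, gmul x (gmul y z) = gmul (gmul x y) z;
  gmul1x : forall x, gmul gone x = x;
  gmulx1 : forall x, gmul x gone = x;
  gmulVx : forall x, gmul (ginv x) x = gone;
  gmulxV : forall x, gmul x (ginv x) = gone }.

Arguments gmul {g}.
Arguments gone {g}.
Arguments ginv {g}.

Section Groups.
Variable G : group.

Fixpoint gpow (x : G) (n : nat) : G :=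
  match n with O => gone | S m => gmul x (gpow x m) end.

Definition gcomm (x y : G) : G := gmul (ginv x) (gmul (ginv y) (gmul x y)).

Definition subgroup (H : G -> Prop) : Prop :=
  H gone /\ (forall x y, H x -> H y -> H (gmul x y)) /\ (forall x, H x -> H (ginv x)).

Definition normal_sub (N : G -> Prop) : Prop :=
  subgroup N /\ forall g x, N x -> N (gmul (ginv g) (gmul x g)).

Definition gen (S : G -> Prop) : G -> Prop :=
  fun x => forall H, subgroup H -> (forall y, S y -> H y) -> H x.

Definition fin_gen : Prop :=
  exists l : list G, forall x, gen (fun y => In y l) x.

(** [index H n] : H has exactly n left cosets in G, i.e. [G:H] = n. *)
Definition index (H : G -> Prop) (n : nat) : Prop :=
  exists l : list G, length l = n /\
    (forall x, exists y, In y l /\ H (gmul (ginv y) x)) /\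
    (forall i j, i < n -> j < n ->
        H (gmul (ginv (nth i l gone)) (nth j l gone)) -> i = j).

Definition p_power_index (p : nat) (H : G -> Prop) : Prop :=
  exists k, index H (p ^ k).

(** generators of the verbal subgroup [A,A]A^p of A *)
Definition frat_gens (p : nat) (A : G -> Prop) : G -> Prop :=
  fun z => (exists x y, A x /\ A y /\ z = gcomm x y) \/ (exists x, A x /\ z = gpow x p).

(** [l] (elements of A) generates A/[A,A]A^p, i.e. A = <l>[A,A]A^p *)
Definition gens_mod_frat (p : nat) (A : G -> Prop) (l : list G) : Prop :=
  (forall a, In a l -> A a) /\
  (forall x, A x -> gen (fun z => In z l \/ frat_gens p A z) x).

(** [dp p A n] : d_p(A) = d(A/[A,A]A^p) = n *)
Definition dp (p : nat) (A : G -> Prop) (n : nat) : Prop :=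
  (exists l, length l = n /\ gens_mod_frat p A l) /\
  (forall l, gens_mod_frat p A l -> n <= length l).

End Groups.

Definition is_hom (G H : group) (f : G -> H) : Prop :=
  forall x y, f (gmul x y) = gmul (f x) (f y).

Definition img (G H : group) (f : G -> H) (A : G -> Prop) : H -> Prop :=
  fun y => exists x, A x /\ f x = y.

Definition total_order_bot (I : Type) (le : I -> I -> Prop) (i0 : I) : Prop :=
  (forall i, le i i) /\
  (forall i j, le i j -> le j i -> i = j) /\
  (forall i j k, le i j -> le j k -> le i k) /\
  (forall i j, le i j \/ le j i) /\
  (forall i, le i0 i).

Definition surj_direct_system (I : Type) (le : I -> I -> Prop)
    (G : I -> group) (pi : forall i j, G i -> G j) : Prop :=
  (forall i j, le i j -> is_hom (pi i j)) /\
  (forall i j, le i j -> forall y : G j, exists x, pi i j x = y) /\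
  (forall i (x : G i), pi i i x = x) /\
  (forall i j k, le i j -> le j k -> forall x, pi j k (pi i j x) = pi i k x).

(** (Ginf, psi) is the direct limit: the disjoint union of the G_i modulo
    x ~ y iff they become equal in some later G_k, with the induced group law. *)
Definition is_direct_limit (I : Type) (le : I -> I -> Prop)
    (G : I -> group) (pi : forall i j, G i -> G j)
    (Ginf : group) (psi : forall i, G i -> Ginf) : Prop :=
  (forall i, is_hom (psi i)) /\
  (forall i j, le i j -> forall x, psi j (pi i j x) = psi i x) /\
  (forall z : Ginf, exists i x, psi i x = z) /\
  (forall i j (x : G i) (y : G j),
      psi i x = psi j y <-> exists k, le i k /\ le j k /\ pi i k x = pi j k y).

(** limit over a totally ordered index set of a nat-valued family (discrete):
    the family is eventually constant, here expressed for a relation-valued quantity *)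
Definition eventually (I : Type) (le : I -> I -> Prop) (P : I -> Prop) : Prop :=
  exists i1, forall i, le i1 i -> P i.

Arguments surj_direct_system {I} le G pi.
Arguments is_direct_limit {I} le G pi Ginf psi.

(** Take [H'] to be the preimage of [K] in [G i0].  The kernel of each [pi i0 i]
    lies in the kernel of [G i0 -> Ginf], so [H'] is saturated for every [pi i0 i]
    and all the images [H'_i] have the same index as [K].  By Schreier's lemma
    [H'] is finitely generated, so some [H'_i] has a finite generating set modulo
    [[H'_i,H'_i]H'_i^p]; let [m] be the least size of such a set over all [i],
    attained at [i1].  Pushing it forward gives [d_p(H'_i) <= m] for [i >= i1]
    and [d_p(K) <= m].  Conversely, lift a generating set of [K] modulo
    [[K,K]K^p] to [H']: each of the finitely many generators chosen at [i1]
    agrees, far enough along the system, with a word in the lifted elements and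
    in commutators and [p]-th powers of [H'], so the lift generates some [H'_k]
    modulo [[H'_k,H'_k]H'_k^p] and [m <= d_p(K)]. *)

From mathcomp Require Import ssreflect ssrbool ssrnat prime.
From Stdlib Require Import List Classical Wf_nat.
Set Implicit Arguments.
Unset Strict Implicit.

Section GroupFacts.
Variable G : group.
Implicit Types (x y z : G) (H S T : G -> Prop).

Lemma mulKg x y : gmul (ginv x) (gmul x y) = y.
Proof. by rewrite gmulA gmulVx gmul1x. Qed.

Lemma mulKVg x y : gmul x (gmul (ginv x) y) = y.
Proof. by rewrite gmulA gmulxV gmul1x. Qed.

Lemma mulgK x y : gmul (gmul y x) (ginv x) = y.
Proof. by rewrite -gmulA gmulxV gmulx1. Qed.

Lemma mulgI x y z : gmul x y = gmul x z -> y = z.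
Proof. by move=> E; rewrite -(mulKg x y) E mulKg. Qed.

Lemma invg_unique x y : gmul x y = gone -> y = ginv x.
Proof. by move=> E; apply: (mulgI (x := x)); rewrite E gmulxV. Qed.

Lemma invgK x : ginv (ginv x) = x.
Proof. by symmetry; apply: invg_unique; apply: gmulVx. Qed.

Lemma invMg x y : ginv (gmul x y) = gmul (ginv y) (ginv x).
Proof. by symmetry; apply: invg_unique; rewrite -gmulA mulKVg gmulxV. Qed.

Lemma invg1 : ginv (@gone G) = gone.
Proof. by symmetry; apply: invg_unique; apply: gmul1x. Qed.

Lemma subgroup1 H : subgroup H -> H gone.
Proof. by case. Qed.

Lemma subgroupM H x y : subgroup H -> H x -> H y -> H (gmul x y).
Proof. by case=> _ [HM _]; apply: HM. Qed.

Lemma subgroupV H x : subgroup H -> H x -> H (ginv x).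
Proof. by case=> _ [_ HV]; apply: HV. Qed.

Lemma subgroupVr H x : subgroup H -> H (ginv x) -> H x.
Proof. by move=> sH Hx; rewrite -(invgK x); apply: subgroupV. Qed.

Lemma gen_subgroup S : subgroup (gen S).
Proof.
split; [|split].
- by move=> H sH _; apply: subgroup1.
- by move=> x y Sx Sy H sH SH; apply: subgroupM => //; [apply: Sx | apply: Sy].
- by move=> x Sx H sH SH; apply: subgroupV => //; apply: Sx.
Qed.

Lemma gen_in S x : S x -> gen S x.
Proof. by move=> Sx H _ SH; apply: SH. Qed.

Lemma gen_min S H : subgroup H -> (forall y, S y -> H y) -> forall x, gen S x -> H x.
Proof. by move=> sH SH x Sx; apply: Sx. Qed.

Lemma gen_mono S T : (forall y, S y -> gen T y) -> forall x, gen S x -> gen T x.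
Proof. exact: gen_min (gen_subgroup T). Qed.

Definition generates H (l : list G) : Prop :=
  (forall a, In a l -> H a) /\ forall x, H x -> gen (fun y => In y l) x.

Lemma generates_gens_mod_frat p H l : generates H l -> gens_mod_frat p H l.
Proof.
case=> lH lgen; split=> // x Hx.
by apply: gen_mono (lgen x Hx) => y ly; apply: gen_in; left.
Qed.

End GroupFacts.

Lemma list_filter_classical (A : Type) (P : A -> Prop) (l : list A) :
  exists l', forall z, In z l' <-> In z l /\ P z.
Proof.
elim: l => [|a l [l' Hl']]; first by exists nil => z /=; tauto.
case: (classic (P a)) => Pa; [exists (a :: l') | exists l'] => z /=; rewrite Hl'.
- by split=> [[<-|]|[[<-|] Pz]]; tauto.
- by split=> [|[[<-|] Pz]]; tauto.
Qed.

Section Schreier.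
Variables (G : group) (H : G -> Prop) (S T : list G).
Hypothesis sH : subgroup H.
Hypothesis S_gen : forall x, gen (fun y => In y S) x.
Hypothesis T_cover : forall x, exists t, In t T /\ H (gmul (ginv t) x).

(* Schreier generators [t'^-1 s t], together with the transversal itself. *)
Let S' := S ++ map ginv S.
Let C := flat_map (fun s => flat_map (fun t =>
           map (fun t' => gmul (ginv t') (gmul s t)) T) T) S' ++ T.
Let M := gen (fun y => In y C /\ H y).

Lemma schreier_cover x :
  forall t, In t T -> exists t', In t' T /\ M (gmul (ginv t') (gmul x t)).
Proof.
pose Q x := forall t, In t T -> exists t', In t' T /\ M (gmul (ginv t') (gmul x t)).
have QS s : In s S' -> Q s.
  move=> Ss t Tt; have [t' [Tt' Ht']] := T_cover (gmul s t).
  exists t'; split=> //; apply: gen_in; split=> //; apply: in_or_app; left.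
  apply/in_flat_map; exists s; split=> //; apply/in_flat_map; exists t; split=> //.
  exact: (in_map (fun t' => gmul (ginv t') (gmul s t))).
have QM y z : Q y -> Q z -> Q (gmul y z).
  move=> Qy Qz t Tt; have [t1 [Tt1 M1]] := Qz t Tt; have [t2 [Tt2 M2]] := Qy t1 Tt1.
  exists t2; split=> //.
  have -> : gmul (ginv t2) (gmul (gmul y z) t)
          = gmul (gmul (ginv t2) (gmul y t1)) (gmul (ginv t1) (gmul z t)).
    by rewrite -!gmulA mulKVg.
  exact: subgroupM (gen_subgroup _) M2 M1.
have Q1 : Q gone.
  by move=> t Tt; exists t; rewrite gmul1x gmulVx; split=> //; apply: subgroup1 (gen_subgroup _).
suff /(_ x (S_gen x)) [] : forall x, gen (fun y => In y S) x -> Q x /\ Q (ginv x) by [].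
apply: gen_min => [|y Sy]; last first.
  by split; apply: QS; apply: in_or_app; [left | right; apply: in_map].
split; [|split].
- by rewrite invg1.
- by move=> y z [Qy Qy'] [Qz Qz']; rewrite invMg; split; apply: QM.
- by move=> y [Qy Qy']; rewrite invgK.
Qed.

Lemma schreier_generates : exists L, generates H L.
Proof.
have [L HL] := list_filter_classical H C.
exists L; split=> [a /HL [] //|h Hh].
have MH : forall x, M x -> H x by apply: gen_min => // y [].
have [t0 [Tt0 Ht0]] := T_cover gone; rewrite gmulx1 in Ht0.
have {}Ht0 : H t0 by apply: subgroupVr.
have [t' [Tt' Mh]] := schreier_cover h Tt0.
have Ht' : H t'.
  apply: subgroupVr => //; rewrite -(mulgK (gmul h t0) (ginv t')).
  by apply: subgroupM => //; [apply: MH | apply: subgroupV => //; apply: subgroupM].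
have CT t : In t T -> In t C by move=> Tt; apply: in_or_app; right.
have -> : h = gmul t' (gmul (gmul (ginv t') (gmul h t0)) (ginv t0)).
  by rewrite -!gmulA gmulxV gmulx1 mulKVg.
have gL := gen_subgroup (fun y => In y L).
apply: (subgroupM gL); first by apply: gen_in; apply/HL; auto.
apply: (subgroupM gL).
  by apply: gen_mono Mh => y Ly; apply: gen_in; apply/HL.
by apply: (subgroupV gL); apply: gen_in; apply/HL; auto.
Qed.

End Schreier.

Lemma fin_index_generates (G : group) (H : G -> Prop) n :
  fin_gen G -> subgroup H -> index H n -> exists L, generates H L.
Proof. by move=> [S S_gen] sH [T [_ [T_cover _]]]; apply: (schreier_generates (S := S)). Qed.

Definition preimg (G1 G2 : group) (f : G1 -> G2) (B : G2 -> Prop) : G1 -> Prop :=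
  fun x => B (f x).

Lemma map_lift (A B : Type) (f : A -> B) :
  (forall y, exists x, f x = y) -> forall l, exists l', map f l' = l.
Proof.
move=> f_surj; elim=> [|y l [l' <-]]; first by exists nil.
by have [x <-] := f_surj y; exists (x :: l').
Qed.

Section Morphism.
Variables (G1 G2 : group) (f : G1 -> G2).
Hypothesis f_hom : is_hom f.

Lemma hom1 : f gone = gone.
Proof. by apply: (mulgI (x := f gone)); rewrite -f_hom !gmulx1. Qed.

Lemma homV x : f (ginv x) = ginv (f x).
Proof. by apply: invg_unique; rewrite -f_hom gmulxV hom1. Qed.

Lemma hom_gcomm x y : f (gcomm x y) = gcomm (f x) (f y).
Proof. by rewrite /gcomm !f_hom !homV. Qed.

Lemma hom_gpow x n : f (gpow x n) = gpow (f x) n.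
Proof. by elim: n => [|n IHn] /=; rewrite ?hom1 // f_hom IHn. Qed.

Lemma subgroup_preimg (B : G2 -> Prop) : subgroup B -> subgroup (preimg f B).
Proof.
move=> sB; split; [|split] => [|x y|x]; rewrite /preimg.
- by rewrite hom1; apply: subgroup1.
- by rewrite f_hom; apply: subgroupM.
- by rewrite homV; apply: subgroupV.
Qed.

Lemma normal_preimg (B : G2 -> Prop) : normal_sub B -> normal_sub (preimg f B).
Proof.
case=> sB nB; split=> [|g x]; first exact: subgroup_preimg.
by rewrite /preimg !f_hom homV; apply: nB.
Qed.

Lemma gen_img (S : G1 -> Prop) (T : G2 -> Prop) :
  (forall s, S s -> gen T (f s)) -> forall x, gen S x -> gen T (f x).
Proof.
move=> ST; apply: (gen_min (H := preimg f (gen T))) => //.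
exact: subgroup_preimg (gen_subgroup T).
Qed.

Lemma gen_lift (S : G1 -> Prop) (T : G2 -> Prop) :
  (forall z, T z -> exists x, f x = z /\ gen S x) ->
  forall z, gen T z -> exists x, f x = z /\ gen S x.
Proof.
have sS := gen_subgroup S.
move=> TS; apply: gen_min => //; split; [|split].
- by exists gone; split; [exact: hom1 | exact: subgroup1 sS].
- move=> _ _ [x [<- Sx]] [y [<- Sy]].
  by exists (gmul x y); rewrite f_hom; split=> //; exact: subgroupM sS Sx Sy.
- move=> _ [x [<- Sx]].
  by exists (ginv x); rewrite homV; split=> //; exact: subgroupV sS Sx.
Qed.

Lemma frat_gens_img p (A : G1 -> Prop) (B : G2 -> Prop) s :
  (forall a, A a -> B (f a)) -> frat_gens p A s -> frat_gens p B (f s).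
Proof.
move=> AB [[x [y [Ax [Ay ->]]]]|[x [Ax ->]]].
- by left; exists (f x), (f y); rewrite hom_gcomm; auto.
- by right; exists (f x); rewrite hom_gpow; auto.
Qed.

Lemma gens_mod_frat_img p (A : G1 -> Prop) (B : G2 -> Prop) l :
  (forall a, A a -> B (f a)) -> (forall y, B y -> exists x, A x /\ f x = y) ->
  gens_mod_frat p A l -> gens_mod_frat p B (map f l).
Proof.
move=> AB BA [lA lgen]; split=> [_ /in_map_iff [x [<- lx]]|_ /BA [x [Ax <-]]].
  exact/AB/lA.
apply: gen_img (lgen x Ax) => s [ls|Fs]; apply: gen_in.
- by left; apply: in_map.
- by right; apply: frat_gens_img Fs.
Qed.

Lemma index_preimg (B : G2 -> Prop) n : (forall y, exists x, f x = y) ->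
  index B n -> index (preimg f B) n.
Proof.
move=> f_surj [l [l_size [l_cover l_distinct]]].
have [l' l'E] := map_lift f_surj l.
exists l'; split; first by rewrite -l'E length_map in l_size.
split=> [x|i j i_lt j_lt].
- have [y [ly By]] := l_cover (f x).
  rewrite -l'E in ly; case/in_map_iff: ly => y' [yE l'y']; subst y.
  by exists y'; split=> //; rewrite /preimg f_hom homV.
- move=> Bij; apply: l_distinct => //.
  by rewrite -l'E -hom1 !map_nth -homV -f_hom.
Qed.

Lemma index_img_saturated (A : G1 -> Prop) n : (forall y, exists x, f x = y) ->
  (forall a h, A h -> f h = f a -> A a) ->
  index A n -> index (img f A) n.
Proof.
move=> f_surj A_sat [l [l_size [l_cover l_distinct]]].
exists (map f l); split; first by rewrite length_map.
split=> [y|i j i_lt j_lt].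
- have [x <-] := f_surj y; have [t [lt At]] := l_cover x.
  exists (f t); split; first exact: in_map.
  by exists (gmul (ginv t) x); rewrite f_hom homV.
- rewrite -hom1 !map_nth -homV -f_hom; case=> h [Ah Eh].
  exact: l_distinct (A_sat _ _ Ah Eh).
Qed.

End Morphism.

Section Eventually.
Variables (I : Type) (le : I -> I -> Prop).
Hypothesis le_trans : forall i j k, le i j -> le j k -> le i k.
Hypothesis le_total : forall i j, le i j \/ le j i.

Lemma eventually_and (P Q : I -> Prop) :
  eventually le P -> eventually le Q -> eventually le (fun i => P i /\ Q i).
Proof.
move=> [i HP] [j HQ]; have [ij|ji] := le_total i j.
- by exists j => k jk; split; [apply: HP; apply: le_trans jk | apply: HQ].
- by exists i => k ik; split; [apply: HP | apply: HQ; apply: le_trans ik].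
Qed.

Lemma eventually_all_in (X : Type) (P : X -> I -> Prop) (l : list X) (i : I) :
  (forall x, In x l -> eventually le (P x)) ->
  eventually le (fun k => le i k /\ forall x, In x l -> P x k).
Proof.
elim: l => [|x l IHl] Pl.
  by exists i => k ik; split.
have [k Hk] := eventually_and (Pl x (in_eq x l)) (IHl (fun y ly => Pl y (in_cons x y l ly))).
exists k => k' kk'; have [Px [ik' Pl']] := Hk k' kk'.
by split=> // y [<-|ly]; auto.
Qed.

End Eventually.

Section DirectLimit.
Variables (I : Type) (le : I -> I -> Prop) (i0 : I).
Hypothesis ord : total_order_bot le i0.
Variables (G : I -> group) (pi : forall i j, G i -> G j).
Hypothesis sys : surj_direct_system le G pi.
Variables (Ginf : group) (psi : forall i, G i -> Ginf).
Hypothesis lim : is_direct_limit le G pi Ginf psi.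
Arguments pi : clear implicits.
Arguments psi : clear implicits.

Let le_refl i : le i i. Proof. by case: ord => refl _; apply: refl. Qed.
Let le_trans i j k : le i j -> le j k -> le i k. Proof. by case: ord => _ [_ [tr _]]; apply: tr. Qed.
Let le_total i j : le i j \/ le j i. Proof. by case: ord => _ [_ [_ [tot _]]]. Qed.
Let le0 i : le i0 i. Proof. by case: ord => _ [_ [_ [_ bot]]]. Qed.
Let pi_hom i j : le i j -> is_hom (pi i j). Proof. by case: sys => hom _; apply: hom. Qed.
Let pi_surj i j : le i j -> forall y, exists x, pi i j x = y. Proof. by case: sys => _ [surj _]; apply: surj. Qed.
Let pi_comp i j k x : le i j -> le j k -> pi j k (pi i j x) = pi i k x.
Proof. by case: sys => _ [_ [_ pi_c]] ij jk; apply: pi_c. Qed.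
Let psi_hom i : is_hom (psi i). Proof. by case: lim => hom _; apply: hom. Qed.
Let psi_pi i j x : le i j -> psi j (pi i j x) = psi i x. Proof. by case: lim => _ [psi_c _] ij; apply: psi_c. Qed.
Let psi_eq i j (x : G i) (y : G j) :
  psi i x = psi j y -> exists k, le i k /\ le j k /\ pi i k x = pi j k y.
Proof. by case: lim => _ [_ [_ psi_e]]; move/psi_e. Qed.

Lemma psi0_surj : forall z, exists x, psi i0 x = z.
Proof.
move=> z; case: lim => _ [_ [psi_s _]]; have [i [x <-]] := psi_s z.
by have [x' <-] := pi_surj (le0 i) x; exists x'; rewrite psi_pi.
Qed.

Variable K : Ginf -> Prop.

Local Notation H := (preimg (psi i0) K).
Local Notation A i := (img (pi i0 i) H).

Lemma img_psi0_preimg z : K z <-> img (psi i0) H z.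
Proof.
split=> [Kz|[x [Hx <-]] //].
by have [x xE] := psi0_surj z; exists x; rewrite /preimg xE.
Qed.

Lemma A_up i j a : le i j -> A i a -> A j (pi i j a).
Proof. by move=> ij [x [Hx <-]]; exists x; rewrite pi_comp. Qed.

Lemma A_down i j y : le i j -> A j y -> exists x, A i x /\ pi i j x = y.
Proof. by move=> ij [x [Hx <-]]; exists (pi i0 i x); split; [exists x | rewrite pi_comp]. Qed.

Lemma A_psi i a : A i a -> K (psi i a).
Proof. by case=> x [Hx <-]; rewrite psi_pi. Qed.

Lemma K_psi i z : K z -> exists a, A i a /\ psi i a = z.
Proof.
move=> Kz; have [x xE] := psi0_surj z.
by exists (pi i0 i x); rewrite psi_pi //; split=> //; exists x; rewrite /preimg xE.
Qed.

Lemma index_A i n : index K n -> index (A i) n.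
Proof.
move=> Kn; apply: (index_img_saturated (pi_hom (le0 i)) (pi_surj (le0 i))).
  by move=> a h Hh hE; rewrite /preimg -(psi_pi a (le0 i)) -hE psi_pi.
exact: (index_preimg (@psi_hom i0) psi0_surj Kn).
Qed.

Variable p : nat.

Lemma gens_mod_frat_A_up i j l : le i j ->
  gens_mod_frat p (A i) l -> gens_mod_frat p (A j) (map (pi i j) l).
Proof. by move=> ij; apply: (gens_mod_frat_img (pi_hom ij)) => [a|y]; [apply: A_up | apply: A_down]. Qed.

Lemma gens_mod_frat_psi i l :
  gens_mod_frat p (A i) l -> gens_mod_frat p K (map (psi i) l).
Proof. by apply: (gens_mod_frat_img (@psi_hom i)) => [a|z]; [apply: A_psi | apply: K_psi]. Qed.

Lemma gen_eventually_lift (S : G i0 -> Prop) (T : Ginf -> Prop) i g :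
  (forall z, T z -> exists x, psi i0 x = z /\ gen S x) -> gen T (psi i g) ->
  eventually le (fun k => exists x, gen S x /\ pi i k g = pi i0 k x).
Proof.
move=> TS /(gen_lift (@psi_hom i0) TS) [x [xE Sx]].
have [k [ik [_ gxE]]] := psi_eq (Logic.eq_sym xE).
exists k => k' kk'; exists x; split=> //.
by rewrite -(pi_comp g ik kk') -(pi_comp x (le0 k) kk') gxE.
Qed.

Lemma psi0_lift_generator (lx : list (G i0)) z :
  In z (map (psi i0) lx) \/ frat_gens p K z ->
  exists x, psi i0 x = z /\ gen (fun w => In w lx \/ frat_gens p H w) x.
Proof.
case=> [|Fz]; last case: Fz => [[a [b [Ka [Kb ->]]]]|[a [Ka ->]]].
- by move=> /in_map_iff [x [<- lx_x]]; exists x; split=> //; apply: gen_in; left.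
- have [[a' aE] [b' bE]] := (psi0_surj a, psi0_surj b); subst a b.
  exists (gcomm a' b'); rewrite hom_gcomm //; split=> //.
  by apply: gen_in; right; left; exists a', b'.
- have [a' aE] := psi0_surj a; subst a.
  exists (gpow a' p); rewrite hom_gpow //; split=> //.
  by apply: gen_in; right; right; exists a'.
Qed.

Lemma gens_mod_frat_lift i1 l1 l :
  gens_mod_frat p (A i1) l1 -> gens_mod_frat p K l ->
  exists k l', length l' = length l /\ gens_mod_frat p (A k) l'.
Proof.
move=> [l1A l1gen] [lK lgen].
have [lx lxE] := map_lift psi0_surj l; subst l.
have [k0 /(_ k0 (le_refl k0)) [i1k0 l1E]] := eventually_all_in le_trans le_total i1
  (fun g l1g => gen_eventually_lift (@psi0_lift_generator lx) (lgen _ (A_psi (l1A g l1g)))).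
exists k0, (map (pi i0 k0) lx); rewrite !length_map; split=> //.
split=> [_ /in_map_iff [x [<- lx_x]]|y /(A_down i1k0) [b [Ab <-]]].
  by exists x; split=> //; apply/lK/in_map.
apply: (gen_img (pi_hom i1k0) _ (l1gen b Ab)) => s [l1s|Fs].
- have [x [Sx ->]] := l1E s l1s.
  apply: (gen_img (pi_hom (le0 k0)) _ Sx) => w [lx_w|Fw]; apply: gen_in.
  + by left; apply: in_map.
  + by right; apply: (frat_gens_img (pi_hom (le0 k0)) _ Fw) => a Ha; exists a.
- by apply: gen_in; right; apply: (frat_gens_img (pi_hom i1k0) _ Fs) => a; apply: A_up.
Qed.

Lemma dp_eventually (l0 : list (G i0)) : generates H l0 ->
  exists m, dp p K m /\ eventually le (fun i => dp p (A i) m).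
Proof.
move=> l0gen.
pose P n := exists i l, length l = n /\ gens_mod_frat p (A i) l.
have [|m [[[i1 [l1 [l1_size l1gen]]] m_min] _]] :=
  dec_inh_nat_subset_has_unique_least_element P (fun n => classic (P n)).
  exists (length l0), i0, (map (pi i0 i0) l0); rewrite length_map; split=> //.
  apply: (gens_mod_frat_img (pi_hom (le_refl i0))) (generates_gens_mod_frat p l0gen).
    by move=> a Ha; exists a.
  by move=> _ [x [Hx <-]]; exists x.
have {}m_min i l : gens_mod_frat p (A i) l -> m <= length l.
  by move=> lgen; apply/leP/m_min; exists i, l.
exists m; split; last first.
  exists i1 => i i1i; split=> [|l /m_min //].
  by exists (map (pi i1 i) l1); rewrite length_map; split=> //; apply: gens_mod_frat_A_up.
split=> [|l lgen].
  by exists (map (psi i1) l1); rewrite length_map; split=> //; apply: gens_mod_frat_psi.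
by have [k [l' [<- /m_min]]] := gens_mod_frat_lift l1gen lgen.
Qed.

End DirectLimit.

Theorem lemma3p4 (I : Type) (le : I -> I -> Prop) (i0 : I)
    (Hord : total_order_bot le i0)
    (G : I -> group) (pi : forall i j, G i -> G j)
    (Hsys : surj_direct_system le G pi)
    (Hfg : forall i, fin_gen (G i))
    (Ginf : group) (psi : forall i, G i -> Ginf)
    (Hlim : is_direct_limit le G pi Ginf psi)
    (p : nat) (Hp : prime p)
    (K : Ginf -> Prop) (HK : normal_sub K) (HKp : p_power_index p K) :
  exists H' : G i0 -> Prop,
    normal_sub H' /\ p_power_index p H' /\
    (forall z, K z <-> img (psi i0) H' z) /\
    (exists n, index K n /\
       eventually le (fun i => index (img (pi i0 i) H') n)) /\
    (exists n, dp p K n /\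
       eventually le (fun i => dp p (img (pi i0 i) H') n)).
Proof.
have psi0_hom : is_hom (psi i0) by case: Hlim => hom _; apply: hom.
have psi0_onto := psi0_surj Hord Hsys Hlim.
have [k Kk] := HKp.
have Hk : index (preimg (psi i0) K) (p ^ k) := index_preimg psi0_hom psi0_onto Kk.
have [L L_gen] := fin_index_generates (Hfg i0) (subgroup_preimg psi0_hom (proj1 HK)) Hk.
exists (preimg (psi i0) K); split; first exact: normal_preimg.
split; first by exists k.
split; first exact: (img_psi0_preimg Hord Hsys Hlim K).
split; last exact: (dp_eventually Hord Hsys Hlim p L_gen).
by exists (p ^ k); split=> //; exists i0 => i _; exact: (index_A Hord Hsys Hlim i Kk).
Qed.
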